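(* Let $P$ be a normal $p$-subgroup of a finite group $G$ with $|P|>p$ and $P\cap\Phi(G)=1$. Let $\tau$ be an inductive $\Phi$-quasiregular subgroup functor, and suppose every maximal subgroup of $P$ is $\mathfrak U_\tau$-supplemented in $G$. Then some maximal subgroup of $P$ is normal in $G$.
   Context: All groups are finite; $\mathfrak U$ is the class of supersoluble groups; $\Phi(G)$ is the Frattini subgroup. For a class $\mathfrak F$, a chief factor $H/K$ of $G$ is $\mathfrak F$-central if $(H/K)\rtimes(G/C_G(H/K))\in\mathfrak F$; $Z_{\mathfrak F}(G)$ is the product of all normal subgroups $N$ of $G$ such that every chief factor of $G$ below $N$ is $\mathfrak F$-central. For $K\le H\le G$, the pair $(K,H)$ satisfies the $\mathfrak F$-supplement condition in $G$ if there is $T\le G$ with $HT=G$ and $H\cap T\subseteq KZ_{\mathfrak F}(T)$. A subgroup functor $\tau$ assigns to each group $G$ a set $\tau(G)$ of subgroups with $1\in\tau(G)$ and $\theta(\tau(G))=\tau(\theta(G))$ for all isomorphisms $\theta$; members are $\tau$-subgroups. $\tau$ is inductive if $HN/N\in\tau(G/N)$ whenever $H\in\tau(G)$, $N\trianglelefteq G$; $\Phi$-quasiregular if for every primitive group $G$ (a group with a maximal subgroup of trivial core), whenever $H\in\tau(G)$ is a $q$-group and $N$ is an abelian minimal normal subgroup of $G$, $|G:N_G(H\cap N)|$ is a power of $q$. With $H_G$ the core of $H$, $H$ is $\mathfrak F_\tau$-supplemented in $G$ if for some $\tau$-subgroup $\bar S$ of $G/H_G$ with $\bar S\le H/H_G$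 the pair $(\bar S,H/H_G)$ satisfies the $\mathfrak F$-supplement condition in $G/H_G$. *)

From HB Require Import structures.
From mathcomp Require Import all_boot all_fingroup all_solvable.
From Stdlib Require Import ClassicalEpsilon.

Set Implicit Arguments.
Unset Strict Implicit.
Unset Printing Implicit Defensive.

Import GroupScope.

Definition pbool (P : Prop) : bool :=
  if excluded_middle_informative P then true else false.

Definition group_class := forall gT : finGroupType, {set gT} -> Prop.

Definition supersoluble : group_class :=
  fun gT (G : {set gT}) =>
  exists (n : nat) (f : nat -> {group gT}),
    [/\ f 0 :=: 1, f n :=: G,
        forall i, i < n -> f i <| G
      & forall i, i < n -> f i \subset f i.+1 /\ cyclic (f i.+1 / f i)].

Lemma section_acts (gT : finGroupType) (G H K : {group gT}) :
  G \subset 'N(K) -> G \subset 'N(H) -> {acts G, on group (H / K) | 'Q}.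
Proof.
move=> nKG nHG; split; first exact: actsQ.
exact: quotientS (subsetT H).
Qed.

(* H/K is F-central in G : (H/K) x| (G / C_G(H/K)) belongs to F, where the
   semidirect product is the external one for the conjugation action of
   G / C_G(H/K) on H/K, and C_G(H/K) is the kernel of the action of G on H/K. *)
Definition Fcentral (F : group_class) (gT : finGroupType) (G H K : {group gT})
  : Prop :=
  forall (nKG : G \subset 'N(K)) (nHG : G \subset 'N(H)),
    let to := <[section_acts nKG nHG]>%gact in
    let C := 'C(H / K | to)%G in
    let tom := (to %% C)%gact in
    F _ [set: sdprod_by tom].

(* Z_F(G): product of all normal subgroups N of G such that every chief
   factor H/K of G with H <= N is F-central. (chief_factor G K H means H/K is a
   chief factor of G.) *)
Definition ZF (F : group_class) (gT : finGroupType) (G : {group gT}) : {set gT} :=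
  << \bigcup_(N : {group gT} | (N <| G) &&
        pbool (forall H K : {group gT},
                 chief_factor G K H -> H \subset N -> Fcentral F G H K)) N >>.

Definition Fsupp_cond (F : group_class) (gT : finGroupType) (G K H : {group gT})
  : Prop :=
  exists T : {group gT},
    [/\ T \subset G, H * T = G & H :&: T \subset K * ZF F T].

(* subgroup functors; tau gT G H means H is a tau-subgroup of G *)
Definition sfunctor := forall gT : finGroupType, {group gT} -> {group gT} -> Prop.

Definition subgroup_functor (tau : sfunctor) : Prop :=
  [/\ (forall gT (G H : {group gT}), tau gT G H -> H \subset G),
      (forall gT (G : {group gT}), tau gT G 1%G)
    & (forall (gT rT : finGroupType) (G : {group gT})
              (f : {morphism G >-> rT}), 'injm f ->
         (forall H : {group gT}, tau gT G H -> tau rT (f @* G)%G (f @* H)%G)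
         /\ (forall K : {group rT}, tau rT (f @* G)%G K ->
               exists2 H : {group gT}, tau gT G H & K :=: f @* H))].

Definition inductive_functor (tau : sfunctor) : Prop :=
  forall gT (G H N : {group gT}),
    tau gT G H -> N <| G -> tau _ (G / N)%G (H / N)%G.

Definition primitive (gT : finGroupType) (G : {group gT}) : Prop :=
  exists M : {group gT}, maximal M G /\ gcore M G = 1.

Definition Phi_quasiregular (tau : sfunctor) : Prop :=
  forall gT (G H N : {group gT}) (q : nat),
    primitive G -> tau gT G H -> prime q -> q.-group H ->
    minnormal N G -> abelian N ->
    q.-nat #|G : 'N_G(H :&: N)|.

Definition Ftau_supplemented (F : group_class) (tau : sfunctor)
  (gT : finGroupType) (G H : {group gT}) : Prop :=
  exists S : {group coset_of (gcore H G)},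
    [/\ tau _ (G / gcore H G)%G S, S \subset H / gcore H G
      & Fsupp_cond F (G / gcore H G)%G S (H / gcore H G)%G].

(* Since P :&: 'Phi(G) = 1, 'Phi(P) = 1 and P is elementary abelian.  A minimal
   normal subgroup N <= P is not contained in 'Phi(G), so it is complemented by a
   maximal subgroup L of G, and P = N * (P :&: L) with P :&: L normal in G; when
   |N| = p, P :&: L is the maximal subgroup we want.  When |N| > p, take a maximal
   subgroup H of N normalised by a Sylow p-subgroup Q: M = H (P :&: L) is maximal
   in P with core P :&: L.  Modulo that core, P becomes a minimal normal subgroup
   of order |N| > p, which meets Z_U trivially because chief factors below Z_U are
   cyclic.  Hence any U-supplement of M is the whole group and M is itself a
   tau-subgroup; Phi-quasiregularity in the primitive group G / core(L) makes the
   index of the normaliser of M a power of p, so Q normalises M, M is normal, and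
   this contradicts the minimality of P. *)

From Pilot Require Import Defs.
From HB Require Import structures.
From mathcomp Require Import all_boot all_fingroup all_solvable.
From Stdlib Require Import ClassicalEpsilon.

Set Implicit Arguments.
Unset Strict Implicit.
Unset Printing Implicit Defensive.

Import GroupScope.

Section GroupFacts.

Variable gT : finGroupType.
Implicit Types G H L M N P Q T X : {group gT}.

Lemma minnormal_sub_meet G N X :
  minnormal N G -> G \subset 'N(N :&: X) -> N :&: X != 1 -> N \subset X.
Proof.
move=> /mingroupP[_ minN] nNXG ntNX.
by rewrite -(minN (N :&: X)%G) ?subsetIr ?subsetIl //= ntNX.
Qed.

Lemma abelian_mul_normsI N (A : {set gT}) T :
  abelian N -> A \subset N -> T \subset 'N(N) -> A * T \subset 'N(N :&: T).
Proof.
move=> cNN sAN nNT; apply: mul_subG; last by rewrite normsI ?normG.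
exact: subset_trans sAN (sub_abelian_norm cNN (subsetIl _ _)).
Qed.

Lemma maximal_joing G M X :
  maximal M G -> X \subset G -> ~~ (X \subset M) -> X <*> M = G.
Proof.
move=> maxM sXG sXM; have /maxgroupP[/andP[sMG _] maxM'] := maxM.
apply/eqP; rewrite eqEsubset join_subG sXG sMG /=; apply: contraR sXM => sGXM.
have <- : X <*> M :=: M.
  by apply: maxM'; rewrite ?joing_subr // properE join_subG sXG sMG.
exact: joing_subl.
Qed.

Lemma PhiS_normal G H : H <| G -> 'Phi(H) \subset 'Phi(G).
Proof.
move=> nsHG; have [sHG nHG] := andP nsHG.
have nPhiG : G \subset 'N('Phi(H)) := char_norm_trans (Phi_char H) nHG.
apply/bigcapsP => M /predU1P[-> | maxM]; first exact: subset_trans (Phi_sub H) sHG.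
apply: contraT => sPhiM.
have sMG := proper_sub (maxgroupp maxM).
have defG := maximal_joing maxM (subset_trans (Phi_sub H) sHG) sPhiM.
have defH : 'Phi(H) <*> (M :&: H) = H.
  rewrite norm_joinEr ?(subset_trans (subsetIl _ _) (subset_trans sMG nPhiG)) //.
  rewrite group_modl ?Phi_sub // -norm_joinEr ?(subset_trans sMG nPhiG) //.
  by rewrite defG (setIidPr sHG).
have /Phi_nongen := defH; rewrite genGid => defMH.
by rewrite (subset_trans (Phi_sub H)) // -defMH subsetIl in sPhiM.
Qed.

Lemma primitive_quotient_gcore G L : maximal L G -> Defs.primitive (G / gcore L G)%G.
Proof.
move=> maxL; have sLG := proper_sub (maxgroupp maxL).
set X := gcore L G; have nsXG : X <| G := gcore_normal sLG.
have nsXL : X <| L := normalS (gcore_sub L G) sLG nsXG.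
exists (L / X)%G; split; first by rewrite quotient_maximal.
set C := gcore _ _; have nsC : C <| G / X by rewrite gcore_normal ?quotientS.
have sYL : coset X @*^-1 C \subset L.
  by rewrite -(quotientGK nsXL) cosetpreSK gcore_sub.
have nsY : coset X @*^-1 C <| G by rewrite -(quotientGK nsXG) cosetpre_normal.
by rewrite -(cosetpreK C) quotientS1 // gcore_max // normal_norm.
Qed.

Lemma minnormal_quotient G N X :
  minnormal N G -> N \subset G -> X <| G -> N :&: X = 1 ->
  minnormal (N / X) (G / X).
Proof.
move=> minN sNG nsXG tiNX; have [_ nXG] := andP nsXG.
have /mingroupP[/andP[ntN nNG] _] := minN.
have nXN := subset_trans sNG nXG.
apply/mingroupP; split=> [|Yb /andP[ntYb nYbG] sYbN].
  rewrite quotient_norms // andbT; apply: contra ntN.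
  by rewrite -!subG1 quotient_sub1 // -tiNX subsetI subxx.
have nsY : coset X @*^-1 Yb <| G.
  rewrite -(quotientGK nsXG) cosetpre_normal /normal nYbG andbT.
  exact: subset_trans sYbN (quotientS _ sNG).
apply/eqP; rewrite eqEsubset sYbN -(cosetpreK Yb) quotientS //.
apply: minnormal_sub_meet minN (normsI nNG (normal_norm nsY)) _.
apply: contra ntYb => /eqP tiNY.
have sYXN : coset X @*^-1 Yb \subset X * N by rewrite -quotientK ?cosetpreSK.
have defY : coset X @*^-1 Yb = X.
  by rewrite -(setIidPr sYXN) -group_modl ?sub_cosetpre // tiNY mulg1.
by rewrite -val_eqE /= -(cosetpreK Yb) defY trivg_quotient.
Qed.

Lemma pgroup_normal_maximal Q N (p : nat) :
  p.-group Q -> N <| Q -> N :!=: 1 -> exists2 H : {group gT}, maximal H N & H <| Q.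
Proof.
move=> pQ /andP[sNQ nNQ] ntN.
have ltNQN : [~: N, Q] \proper N.
  by apply: nil_comm_properl (pgroup_nil pQ) sNQ ntN _; rewrite subsetI subxx.
have [defN | [H maxH sNQH]] := maximal_exists (proper_sub ltNQN).
  by rewrite defN properxx in ltNQN.
have sHN := proper_sub (maxgroupp maxH).
exists H; rewrite // /normal (subset_trans sHN sNQ) -commg_subl.
exact: subset_trans (commSg _ sHN) sNQH.
Qed.

Lemma minnormal_abelian_complement G N :
  abelian N -> minnormal N G -> N \subset G -> ~~ (N \subset 'Phi(G)) ->
  exists2 L : {group gT}, maximal L G & N * L = G /\ N :&: L = 1.
Proof.
move=> cNN minN sNG sNPhi; have /andP[_ nNG] := mingroupp minN.
have [L maxL sNL] : exists2 L : {group gT}, maximal L G & ~~ (N \subset L).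
  apply/exists_inP; apply: contraR sNPhi => /exists_inPn sNmax.
  apply/bigcapsP => M /predU1P[-> // | maxM]; exact/negbNE/sNmax.
have sLG := proper_sub (maxgroupp maxL); have nNL := subset_trans sLG nNG.
have defG : N * L = G by rewrite -norm_joinEr // (maximal_joing maxL sNG sNL).
exists L => //; split => //; apply/eqP; apply: contraR sNL => ntNL.
apply: minnormal_sub_meet minN _ ntNL.
by rewrite -defG; exact: abelian_mul_normsI cNN (subxx N) nNL.
Qed.

Lemma abelian_minnormal_supplement G P H T :
  abelian P -> minnormal P G -> P \subset G -> H \proper P -> T \subset G ->
  H * T = G -> T :=: G.
Proof.
move=> cPP minP sPG ltHP sTG defG; have sHP := proper_sub ltHP.
have /andP[_ nPG] := mingroupp minP.
have sPT : P \subset T.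
  apply: minnormal_sub_meet minP _ _.
    by rewrite -defG; exact: abelian_mul_normsI cPP sHP (subset_trans sTG nPG).
  apply: contraTneq ltHP => tiPT.
  by rewrite properE sHP negbK -{1}(setIidPr sPG) -defG -group_modl // setIC tiPT mulg1.
by apply/eqP; rewrite eqEsubset sTG -defG mul_subG ?(subset_trans sHP sPT).
Qed.

End GroupFacts.

Lemma pboolP (P : Prop) : pbool P -> P.
Proof. by rewrite /pbool; case: excluded_middle_informative. Qed.

Definition Fcentral_below (F : group_class) (gT : finGroupType) (G N : {group gT})
  : Prop :=
  forall H K : {group gT}, chief_factor G K H -> H \subset N -> Fcentral F G H K.

Section HyperCentre.

Variables (F : group_class) (gT : finGroupType) (G : {group gT}).

Lemma ZF_normal : ZF F G <| G.
Proof.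
rewrite /normal gen_subG norms_gen ?andbT; first by apply/bigcupsP => N /andP[/andP[]].
by apply: norms_bigcup; apply/bigcapsP => N /andP[/andP[]].
Qed.

Lemma ZF_subPn (Y : {group gT}) :
  ~~ (ZF F G \subset Y) ->
  exists2 N : {group gT}, N <| G /\ Fcentral_below F G N & ~~ (N \subset Y).
Proof.
rewrite gen_subG => /subsetPn[x /bigcupP[N /andP[nsNG /pboolP FN] Nx] Yx].
by exists N => //; apply/subsetPn; exists x.
Qed.

End HyperCentre.

Lemma supersoluble_normal_cyclic (gT : finGroupType) (R A : {group gT}) :
  supersoluble R -> A <| R -> A :!=: 1 ->
  exists W : {group gT}, [/\ W <| R, W \subset A, W :!=: 1 & cyclic W].
Proof.
case=> n [f [f0 fn nsfR sf]] nsAR ntA; have sAR := normal_sub nsAR.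
have ntfnA : f n :&: A != 1 by rewrite fn (setIidPr sAR).
have exA : exists i, f i :&: A != 1 by exists n.
case: (ex_minnP exA) => -[|i] ntfA min_i.
  by rewrite f0 setI1g eqxx in ntfA.
have lt_in : i < n by apply: min_i.
have tifA : f i :&: A = 1 by apply/eqP/negbNE/negP => /min_i; rewrite ltnn.
have nsf : f i.+1 <| R.
  have [/nsfR // | ge_n] := ltnP i.+1 n.
  have -> : i.+1 = n by apply/eqP; rewrite eqn_leq lt_in ge_n.
  by rewrite fn normal_refl.
have [sff cycf] := sf i lt_in.
exists (f i.+1 :&: A)%G; split; rewrite ?subsetIr ?normalI //.
have nfW : f i.+1 :&: A \subset 'N(f i).
  apply: subset_trans (subset_trans (subsetIl _ _) (normal_sub nsf)) _.
  exact: normal_norm (nsfR i lt_in).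
have tiW : f i :&: (f i.+1 :&: A) = 1 by rewrite setIA (setIidPl sff).
rewrite (isog_cyclic (quotient_isog nfW tiW)).
exact: cyclicS (quotientS _ (subsetIl _ _)) cycf.
Qed.

Lemma Fcentral_supersoluble_cyclic (gT : finGroupType) (G H K : {group gT}) :
  chief_factor G K H -> Fcentral supersoluble G H K -> cyclic (H / K).
Proof.
move=> chf Fc; have /andP[maxK /andP[sHG nHG]] := chf.
have /andP[ltKH nKG] := maxgroupp maxK.
have := Fc nKG nHG.
set to := <[_]>%gact; set C := 'C(H / K | to)%G; set tom := (to %% C)%gact.
move=> superR.
have sCG : C \subset G by apply: subsetIl.
have nCG : G \subset 'N(C).
  apply: subset_trans (astab_norm _ _); apply/subsetP => a Ga.
  by rewrite !inE Ga; apply/subsetP => x Hx; rewrite inE gact_stable.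
have defR : 'C_(|to)(C) = H / K.
  rewrite gacentE //; apply/eqP; rewrite eqEsubset subsetIl subsetI subxx /=.
  by rewrite -astabCin.
have injR := injm_sdpair1 tom.
have ntR : sdpair1 tom @* 'C_(|to)(C) != 1.
  rewrite morphim_injm_eq1 // defR -subG1 quotient_sub1 ?proper_subn //.
  exact: subset_trans sHG nKG.
have [nsR _ _ _ _] := sdprod_context (sdprod_sdpair tom).
(* H/K sits as a normal subgroup in the supersoluble group (H/K) ><| G/C; a
   cyclic normal subgroup inside it pulls back to a G-invariant cyclic W0. *)
have [W [nsW sWR ntW cycW]] := supersoluble_normal_cyclic superR nsR ntR.
set W0 := sdpair1 tom @*^-1 W.
have defW : sdpair1 tom @* W0 = W by rewrite morphpreK.
have sW0 : W0 \subset H / K by rewrite -defR morphpre_sub.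
have nW0 : G / C \subset 'N(W0 | tom).
  rewrite astabsEsd; last exact: morphpre_sub.
  apply/subsetP => u Gu.
  by rewrite !inE Gu defW /= (normsP (normal_norm nsW)) ?inE.
have nW0GK : G / K \subset 'N(W0).
  apply/subsetP => _ /morphimP[a Na Ga ->]; rewrite inE.
  apply/subsetP => _ /imsetP[x W0x ->]; have Hx := subsetP sW0 x W0x.
  have := W0x; rewrite -(astabs_act x (subsetP nW0 _ (mem_quotient C Ga))).
  rewrite modgactE ?subxx //; last by rewrite inE Ga (subsetP nCG).
  by rewrite /= actbyE // qactJ (subsetP nKG).
have /mingroupP[_ minHK] := chief_factor_minnormal chf.
have ntW0 : W0 != 1.
  by apply: contra ntW => /eqP W01; rewrite -defW W01 morphim1.
rewrite -(minHK W0) ?ntW0 //.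
by rewrite -(injm_cyclic injR (morphpre_sub _ _)) defW.
Qed.

Lemma cyclic_chief_factor_prime (gT : finGroupType) (G H K : {group gT}) :
  chief_factor G K H -> cyclic (H / K) -> prime #|H / K|.
Proof.
move=> chf cycHK; have minHK := chief_factor_minnormal chf.
have [_ ntHK /is_abelemP[q pr_q abHK]] :=
  minnormal_solvable minHK (subxx _) (abelian_sol (cyclic_abelian cycHK)).
have := card_pgroup (abelem_pgroup abHK).
have : logn q #|H / K| <= 1 by rewrite -(abelem_cyclic abHK).
case: (logn q _) => [|[|//]] _ cardHK; last by rewrite cardHK expn1.
by rewrite trivg_card1 cardHK in ntHK.
Qed.

Section ChiefFactorAboveComplement.

Variables (gT : finGroupType) (G P Y N : {group gT}).
Hypotheses (minP : minnormal P G) (sPG : P \subset G) (nsYG : Y <| G).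
Hypotheses (tiPY : P :&: Y = 1) (nsNG : N <| G) (sPNY : P \subset N <*> Y).

Let nYG := normal_norm nsYG.
Let sYPY : Y \subset P <*> Y := joing_subr P Y.
Let defPY : P <*> Y = P * Y := norm_joinEl (subset_trans sPG nYG).

Lemma meet_joing_mul : (N :&: P <*> Y) * Y = P <*> Y.
Proof.
rewrite setIC group_modr // -norm_joinEl ?(subset_trans (normal_sub nsNG)) //.
by rewrite (setIidPl _) // join_subG sPNY joing_subr.
Qed.

Lemma meet_joing_capY : (N :&: P <*> Y) :&: Y = N :&: Y.
Proof. by rewrite -setIA (setIidPr sYPY). Qed.

Lemma card_quotient_meet_joing : #|(N :&: P <*> Y) / (N :&: Y)| = #|P|.
Proof.
have nsNY := normalI nsNG nsYG.
rewrite card_quotient; last first.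
  exact: subset_trans (subset_trans (subsetIl _ _) (normal_sub nsNG)) (normal_norm nsNY).
rewrite /= -meet_joing_capY indexgI -indexMg -normC; last first.
  exact: subset_trans (subsetIl _ _) (subset_trans (normal_sub nsNG) nYG).
rewrite meet_joing_mul defPY normC ?(subset_trans sPG nYG) //.
by rewrite indexMg -indexgI tiPY indexg1.
Qed.

Lemma chief_factor_meet_joing : chief_factor G (N :&: Y)%G (N :&: P <*> Y)%G.
Proof.
have /andP[ntP nPG] := mingroupp minP.
have nsPY : P <*> Y <| G by rewrite normalY // /normal sPG.
have nsH : N :&: P <*> Y <| G by rewrite normalI.
rewrite /chief_factor nsH andbT; apply/maxgroupP; split.
  have nKG := normal_norm (normalI nsNG nsYG).
  rewrite nKG andbT properE setIS //=; apply: contra ntP.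
  rewrite -(quotient_sub1 (subset_trans (normal_sub nsH) nKG)) => /trivgP HK1.
  by rewrite trivg_card1 -card_quotient_meet_joing HK1 cards1.
move=> X /andP[ltXH nXG] sKX; have sXH := proper_sub ltXH.
have sXN : X \subset N := subset_trans sXH (subsetIl _ _).
have sXG : X \subset G := subset_trans sXH (normal_sub nsH).
have defXY : X <*> Y = X * Y := norm_joinEl (subset_trans sXG nYG).
have [tiPXY | ntPXY] := eqVneq (P :&: X <*> Y) 1.
  have sXYPY : X <*> Y \subset P <*> Y.
    by rewrite join_subG sYPY andbT (subset_trans sXH) ?subsetIr.
  have defY : X <*> Y = Y.
    have := group_modr P (joing_subr X Y); rewrite setIC tiPXY mul1g.
    by rewrite -defPY (setIidPl sXYPY).
  by apply/eqP; rewrite eqEsubset sKX andbT subsetI sXN -defY joing_subl.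
have sPXY : P \subset X <*> Y.
  have nsXG : X <| G by rewrite /normal sXG.
  exact: minnormal_sub_meet minP (normsI nPG (normal_norm (normalY nsXG nsYG))) ntPXY.
case/negP: (proper_subn ltXH).
have defX : X * Y :&: N = X by rewrite -group_modl // setIC mulGSid.
by rewrite -defX -defXY setIC setIS // join_subG sPXY joing_subr.
Qed.

End ChiefFactorAboveComplement.

Lemma minnormal_sub_ZF_prime (gT : finGroupType) (G P : {group gT}) :
  minnormal P G -> P \subset G -> P \subset ZF supersoluble G -> prime #|P|.
Proof.
move=> minP sPG sPZ; have /andP[ntP nPG] := mingroupp minP.
pose complP (Y : {group gT}) := (Y <| G) && (P :&: Y == 1).
have [Y maxY _] : {Y : {group gT} | maxgroup Y complP & 1%G \subset Y}.
  by apply: maxgroup_exists; rewrite /complP normal1 setIg1 eqxx.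
have /maxgroupP[/andP[nsYG /eqP tiPY] maxY'] := maxY.
have [|N [nsNG FN] sNY] := @ZF_subPn supersoluble _ G Y.
  apply: contra ntP => sZY.
  by rewrite -subG1 -tiPY subsetI subxx (subset_trans sPZ sZY).
have sPNY : P \subset N <*> Y.
  apply: minnormal_sub_meet minP (normsI nPG (normal_norm (normalY nsNG nsYG))) _.
  apply: contra sNY => /eqP tiPNY.
  rewrite -(maxY' (N <*> Y)%G) ?joing_subl ?joing_subr //.
  by rewrite /complP normalY //= tiPNY eqxx.
have chf := chief_factor_meet_joing minP sPG nsYG tiPY nsNG sPNY.
rewrite -(card_quotient_meet_joing sPG nsYG tiPY nsNG sPNY).
have cycHK := Fcentral_supersoluble_cyclic chf (FN _ _ chf (subsetIl _ _)).
exact: cyclic_chief_factor_prime chf cycHK.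
Qed.

Lemma minnormal_pgroup_meet_ZF (gT : finGroupType) (G P : {group gT}) (p : nat) :
  p.-group P -> minnormal P G -> P \subset G -> p < #|P| ->
  P :&: ZF supersoluble G = 1.
Proof.
move=> pP minP sPG ltpP; have /andP[_ nPG] := mingroupp minP.
apply/eqP; apply: contraTT ltpP => ntPZ.
have nPZ := normsI nPG (normal_norm (ZF_normal supersoluble G)).
have prP := minnormal_sub_ZF_prime minP sPG (minnormal_sub_meet minP nPZ ntPZ).
by have /eqnP-> := (pgroupP pP) _ prP (dvdnn _); rewrite ltnn.
Qed.

Lemma supersoluble_supplement_maximal_eq (gT : finGroupType)
    (G P H S : {group gT}) (p : nat) :
  p.-group P -> minnormal P G -> P \subset G -> p < #|P| ->
  maximal H P -> S \subset H -> Fsupp_cond supersoluble G S H -> S :=: H.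
Proof.
move=> pP minP sPG ltpP maxH sSH [T [sTG defG sHTZ]].
have [_ _ /is_abelemP[q _ /abelem_abelian cPP]] :=
  minnormal_solvable minP (subxx _) (pgroup_sol pP).
have ltHP := maxgroupp maxH; have sHP := proper_sub ltHP.
have /group_inj defT := abelian_minnormal_supplement cPP minP sPG ltHP sTG defG.
subst T; rewrite (setIidPl (subset_trans sHP sPG)) in sHTZ.
have tiZH : ZF supersoluble G :&: H = 1.
  by apply/trivgP; rewrite -(minnormal_pgroup_meet_ZF pP minP sPG ltpP) setIC setIS.
by apply/eqP; rewrite eqEsubset sSH /= -(setIidPr sHTZ) -group_modl // tiZH mulg1.
Qed.

Lemma quasiregular_proper_minnormal_trivg (tau : sfunctor) (gT : finGroupType)
    (G P L Q H : {group gT}) (p : nat) :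
  inductive_functor tau -> Phi_quasiregular tau -> prime p ->
  p.-group P -> minnormal P G -> P \subset G -> maximal L G -> P :&: L = 1 ->
  p.-Sylow(G) Q -> Q \subset 'N(H) -> tau gT G H -> H \proper P -> H :=: 1.
Proof.
move=> tau_ind tau_qreg pr_p pP minP sPG maxL tiPL sylQ nHQ tauH ltHP.
have sHP := proper_sub ltHP; have sLG := proper_sub (maxgroupp maxL).
set X := gcore L G; have nsXG : X <| G := gcore_normal sLG.
have nXG := normal_norm nsXG; have nXP := subset_trans sPG nXG.
have tiPX : P :&: X = 1 by apply/trivgP; rewrite -tiPL setIS ?gcore_sub.
have [_ _ /is_abelemP[q _ /abelem_abelian cPP]] :=
  minnormal_solvable minP (subxx _) (pgroup_sol pP).
have minPX := minnormal_quotient minP sPG nsXG tiPX.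
have := tau_qreg _ _ _ _ p (primitive_quotient_gcore maxL) (tau_ind _ _ _ _ tauH nsXG)
  pr_p (quotient_pgroup _ (pgroupS sHP pP)) minPX (quotient_abelian _ cPP).
rewrite /= (setIidPl (quotientS _ sHP)) => p_idx.
have /and3P[sQXG _ p'idx] := quotient_pHall (subset_trans (pHall_sub sylQ) nXG) sylQ.
have sQXN : Q / X \subset 'N_(G / X)(H / X) by rewrite subsetI sQXG quotient_norms.
have /eqP := pnat_1 p_idx (pnat_dvd (indexgS _ sQXN) p'idx).
rewrite indexg_eq1 subsetI => /andP[_ nHXG].
have cardX (A : {group gT}) : A \subset P -> #|A / X| = #|A|.
  move=> sAP; rewrite -(card_isog (quotient_isog (subset_trans sAP nXP) _)) //.
  by apply/trivgP; rewrite -tiPX setIC setIS.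
have [HX1 | ntHX] := eqVneq (H / X) 1.
  by apply/card1_trivg; rewrite -cardX // HX1 cards1.
have /mingroupP[_ minPX'] := minPX.
have := minPX' (H / X)%G; rewrite ntHX nHXG => /(_ isT (quotientS _ sHP)) /= eqHP.
by move: ltHP; rewrite properEcard -(cardX _ sHP) eqHP cardX // ltnn andbF.
Qed.

Lemma no_supersoluble_supplement_tau_maximal (tau : sfunctor) (gT : finGroupType)
    (G P L Q H S : {group gT}) (p : nat) :
  inductive_functor tau -> Phi_quasiregular tau -> prime p ->
  p.-group P -> minnormal P G -> P \subset G -> p < #|P| ->
  maximal L G -> P :&: L = 1 -> maximal H P ->
  p.-Sylow(G) Q -> Q \subset 'N(H) ->
  tau gT G S -> S \subset H -> ~ Fsupp_cond supersoluble G S H.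
Proof.
move=> tau_ind tau_qreg pr_p pP minP sPG ltpP maxL tiPL maxH sylQ nHQ tauS sSH suppS.
have /group_inj defS :=
  supersoluble_supplement_maximal_eq pP minP sPG ltpP maxH sSH suppS.
subst S; have H1 := quasiregular_proper_minnormal_trivg tau_ind tau_qreg pr_p pP
  minP sPG maxL tiPL sylQ nHQ tauS (maxgroupp maxH).
move: ltpP; rewrite -(Lagrange (proper_sub (maxgroupp maxH))).
by rewrite (p_maximal_index pP maxH) H1 cards1 mul1n ltnn.
Qed.

Section MinnormalComplement.

Variables (gT : finGroupType) (G P N L : {group gT}) (p : nat).
Hypotheses (pP : p.-group P) (nsPG : P <| G) (cPP : abelian P).
Hypotheses (minN : minnormal N G) (sNP : N \subset P) (maxL : maximal L G).
Hypotheses (defG : N * L = G) (tiNL : N :&: L = 1).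

Let sPG := normal_sub nsPG.
Let sLG := proper_sub (maxgroupp maxL).

Lemma complement_meet_normal : P :&: L <| G.
Proof.
rewrite /normal subIset ?sPG // -defG mul_subG //.
  exact: subset_trans sNP (sub_abelian_norm cPP (subsetIl _ _)).
by rewrite normsI ?normG ?(subset_trans sLG (normal_norm nsPG)).
Qed.

Lemma complement_meet_mul : N * (P :&: L) = P.
Proof. by rewrite setIC group_modl // defG (setIidPr sPG). Qed.

Lemma complement_meet_trivI : N :&: (P :&: L) = 1.
Proof. by apply/trivgP; rewrite -tiNL setIS ?subsetIr. Qed.

Lemma card_complement_meet : #|P| = (#|N| * #|P :&: L|)%N.
Proof.
by rewrite -{1}complement_meet_mul mul_cardG complement_meet_trivI cards1 muln1.
Qed.

Lemma prime_minnormal_maximal : prime p -> #|N| = p -> maximal (P :&: L) P.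
Proof.
move=> pr_p cardN; apply: p_index_maximal (subsetIl _ _) _.
by rewrite -divgS ?subsetIl // card_complement_meet mulnK // cardN.
Qed.

Let nDG := normal_norm complement_meet_normal.

Lemma joing_complement_meet_mul (H : {group gT}) :
  H \subset N -> H <*> (P :&: L) = H * (P :&: L).
Proof.
move=> sHN; apply: norm_joinEl.
exact: subset_trans sHN (subset_trans sNP (subset_trans sPG nDG)).
Qed.

Lemma maximal_joing_complement_meet (H : {group gT}) :
  prime p -> maximal H N -> maximal (H <*> (P :&: L)) P.
Proof.
move=> pr_p maxH; have sHN := proper_sub (maxgroupp maxH).
have sHDP : H <*> (P :&: L) \subset P by rewrite join_subG subsetIl (subset_trans sHN).
apply: p_index_maximal sHDP _; rewrite -divgS //= joing_complement_meet_mul //.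
have tiHD : H :&: (P :&: L) = 1.
  by apply/trivgP; rewrite -complement_meet_trivI setSI.
have -> : #|H * (P :&: L)| = (#|H| * #|P :&: L|)%N.
  by rewrite mul_cardG tiHD cards1 muln1.
rewrite card_complement_meet.
rewrite -(Lagrange sHN) (p_maximal_index (pgroupS sNP pP) maxH).
by rewrite mulnAC mulKn // muln_gt0 !cardG_gt0.
by rewrite mul_subG ?subsetIl ?(subset_trans sHN).
Qed.

Lemma gcore_joing_complement_meet (H : {group gT}) :
  H \proper N -> gcore (H <*> (P :&: L)) G = P :&: L.
Proof.
move=> ltHN; have sHN := proper_sub ltHN; have /andP[_ nNG] := mingroupp minN.
have sMG : H <*> (P :&: L) \subset G.
  by rewrite join_subG (subset_trans sHN (subset_trans sNP sPG)) subIset ?sPG.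
set C := gcore _ G; have sCM : C \subset H <*> (P :&: L) := gcore_sub _ G.
have tiNC : N :&: C = 1.
  apply/eqP; apply: contraR (proper_subn ltHN) => ntNC.
  have nNCG := normsI nNG (normal_norm (gcore_normal sMG)).
  have sNC := minnormal_sub_meet minN nNCG ntNC.
  rewrite -[H : {set gT}]mulg1 -complement_meet_trivI setIC group_modl //.
  by rewrite -joing_complement_meet_mul // subsetI subxx (subset_trans sNC).
have sDC : P :&: L \subset C := gcore_max (joing_subr _ _) nDG.
apply/eqP; rewrite eqEsubset sDC andbT.
have sCP : C \subset P.
  by rewrite (subset_trans sCM) // join_subG subsetIl (subset_trans sHN).
have defC : C :&: N * (P :&: L) = C by rewrite complement_meet_mul (setIidPl sCP).
by rewrite -defC -group_modr // setIC tiNC mul1g.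
Qed.

Lemma large_minnormal_not_tau_supplemented (tau : sfunctor) :
  inductive_functor tau -> Phi_quasiregular tau -> prime p -> p < #|N| ->
  ~ (forall M : {group gT}, maximal M P -> Ftau_supplemented supersoluble tau G M).
Proof.
move=> tau_ind tau_qreg pr_p ltpN supplP.
have /andP[ntN nNG] := mingroupp minN; have sNG := subset_trans sNP sPG.
have [Q sylQ] := Sylow_exists p G; have [sQG pQ _] := and3P sylQ.
have nsNG : N <| G by rewrite /normal sNG.
have sNQ := normal_sub_max_pgroup (Hall_max sylQ) (pgroupS sNP pP) nsNG.
have [H maxH nsHQ] := pgroup_normal_maximal pQ (normalS sNQ sQG nsNG) ntN.
set D := P :&: L; set M := (H <*> D)%G.
have maxM := maximal_joing_complement_meet pr_p maxH.
have [S [tauS sSM suppS]] := supplP M maxM.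
set C := gcore M G; have defC : C = D := gcore_joing_complement_meet (maxgroupp maxH).
have nsCG : C <| G by rewrite defC complement_meet_normal.
have nCG := normal_norm nsCG; have sCM : C \subset M := gcore_sub M G.
have sCL : C \subset L by rewrite defC subsetIr.
have sCP : C \subset P by rewrite defC subsetIl.
have tiNC : N :&: C = 1 by rewrite defC complement_meet_trivI.
have defPC : P / C = N / C by rewrite -complement_meet_mul -/D -defC quotientMidr.
apply: (no_supersoluble_supplement_tau_maximal (P := (P / C)%G) (L := (L / C)%G)
  (Q := (Q / C)%G) tau_ind tau_qreg pr_p _ _ _ _ _ _ _ _ _ tauS sSM suppS).
- exact: quotient_pgroup.
- by rewrite /= defPC; apply: minnormal_quotient minN sNG nsCG tiNC.
- exact: quotientS.
- by rewrite /= defPC -(card_isog (quotient_isog (subset_trans sNG nCG) _)) // setIC.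
- by rewrite quotient_maximal // (normalS sCL (proper_sub (maxgroupp maxL))).
- by rewrite -quotientGI // -/D -defC trivg_quotient.
- have sMG := subset_trans (proper_sub (maxgroupp maxM)) sPG.
  by rewrite quotient_maximal ?(normalS sCP sPG nsCG) ?(normalS sCM sMG nsCG).
- exact: quotient_pHall (subset_trans sQG nCG) sylQ.
apply: quotient_norms; rewrite norms_gen // normsU ?(normal_norm nsHQ) //.
exact: subset_trans sQG (normal_norm complement_meet_normal).
Qed.

End MinnormalComplement.

Theorem lemma3p8 (tau : sfunctor) (gT : finGroupType) (G P : {group gT})
  (p : nat) :
  subgroup_functor tau -> inductive_functor tau -> Phi_quasiregular tau ->
  prime p -> p.-group P -> P <| G -> p < #|P| -> P :&: 'Phi(G) = 1 ->
  (forall M : {group gT}, maximal M P -> Ftau_supplemented supersoluble tau G M) ->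
  exists M : {group gT}, maximal M P /\ M <| G.
Proof.
move=> _ tau_ind tau_qreg pr_p pP nsPG ltpP tiPPhi supplP.
have [sPG nPG] := andP nsPG.
have ntP : P :!=: 1 by rewrite trivg_card1 neq_ltn (ltn_trans (prime_gt1 pr_p)) ?orbT.
have cPP : abelian P.
  apply: (@abelem_abelian _ p); rewrite -trivg_Phi // -subG1 -tiPPhi.
  by rewrite subsetI Phi_sub PhiS_normal.
have [N minN sNP] := minnormal_exists ntP nPG; have /andP[ntN _] := mingroupp minN.
have sNPhi : ~~ (N \subset 'Phi(G)).
  by apply: contra ntN => sNPhi; rewrite -subG1 -tiPPhi subsetI sNP.
have [L maxL [defG tiNL]] :=
  minnormal_abelian_complement (abelianS sNP cPP) minN (subset_trans sNP sPG) sNPhi.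
have [ltpN | leNp] := ltnP p #|N|.
  by case: (large_minnormal_not_tau_supplemented pP nsPG cPP minN sNP maxL defG tiNL
              tau_ind tau_qreg pr_p ltpN supplP).
have [_ dvd_p_N _] := pgroup_pdiv (pgroupS sNP pP) ntN.
have cardN : #|N| = p by apply/eqP; rewrite eqn_leq leNp dvdn_leq.
exists (P :&: L)%G; split.
  exact: prime_minnormal_maximal nsPG sNP defG tiNL pr_p cardN.
exact: complement_meet_normal nsPG cPP sNP maxL defG.
Qed.
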